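(* Let $n \in \mathbb N$ and let $F\colon\mathbb R_+^n\to \mathbb R_+$ be an amenable function. If there exist constants $a, c \in \mathbb{R}$ with $0<a\leqslant c$ such that $F(\mathbf x)\in[a,c]$ for every $\mathbf x\in\mathbb R_+^n\setminus\{(0,\dots,0)\}$, then $F$ is $(n)$-b-metric preserving with constant $K = \max\{1, \frac{c}{2a}\}$; that is, for every collection of b-metric spaces $(X_i,d_i)$, $i=1,\dots,n$, the function $D(\mathbf x,\mathbf y)=F(d_1(x_1,y_1),\dots,d_n(x_n,y_n))$ on $\prod_{i=1}^nX_i$ is a b-metric satisfying $D(\mathbf x,\mathbf y)\leqslant K(D(\mathbf x,\mathbf z)+D(\mathbf z,\mathbf y))$ for all $\mathbf x,\mathbf y,\mathbf z$.
   Context: $\mathbb R_+=[0,\infty)$. $F$ is amenable if $F(\mathbf x)=0\iff\mathbf x=(0,\dots,0)$. A b-metric on $X$ is $d\colon X^2\to\mathbb R_+$ with $d(x,y)=0\iff x=y$, $d(x,y)=d(y,x)$, and for some $K\geqslant1$, $d(x,z)\leqslant K(d(x,y)+d(y,z))$ for all $x,y,z$ (the relaxation constants of the spaces $(X_i,d_i)$ are arbitrary). *)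

From mathcomp Require Import all_boot all_order all_algebra.
From mathcomp Require Import reals.
Set Implicit Arguments. Unset Strict Implicit. Unset Printing Implicit Defensive.
Import Order.TTheory GRing.Theory Num.Theory.
Local Open Scope ring_scope.

Definition nonneg_vec {R : realType} {n : nat} (x : 'I_n -> R) : Prop :=
  forall i, 0 <= x i.

Definition zero_vec {R : realType} {n : nat} (x : 'I_n -> R) : Prop :=
  forall i, x i = 0.

(* F : R_+^n -> R_+ (only values on R_+^n matter) *)
Definition maps_into_Rplus {R : realType} {n : nat} (F : ('I_n -> R) -> R) : Prop :=
  forall x, nonneg_vec x -> 0 <= F x.

Definition amenable {R : realType} {n : nat} (F : ('I_n -> R) -> R) : Prop :=
  forall x, nonneg_vec x -> (F x = 0 <-> zero_vec x).

Definition bmetric_with {R : realType} {T : Type} (d : T -> T -> R) (K : R) : Prop :=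
  [/\ 1 <= K,
      (forall x y, 0 <= d x y),
      (forall x y, d x y = 0 <-> x = y),
      (forall x y, d x y = d y x)
    & (forall x y z, d x z <= K * (d x y + d y z))].

Definition is_bmetric {R : realType} {T : Type} (d : T -> T -> R) : Prop :=
  exists K : R, bmetric_with d K.

Definition prod_dist {R : realType} {n : nat} (F : ('I_n -> R) -> R)
  (X : 'I_n -> Type) (d : forall i, X i -> X i -> R)
  (x y : forall i, X i) : R :=
  F (fun i => d i (x i) (y i)).

From mathcomp Require Import all_boot all_order all_algebra.
From mathcomp Require Import reals.
From mathcomp Require Import boolp.
Import Order.TTheory GRing.Theory Num.Theory.
Local Open Scope ring_scope.

(* Distinct points are at distance in [a, c], so when y differs from x and z,
   D x z <= c <= K (2 a) <= K (D x y + D y z); when y equals x or z, the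
   relaxed triangle inequality only needs K >= 1. *)

Section BoundedSemimetric.

Variables (R : realType) (T : Type) (D : T -> T -> R) (a c : R).

Hypotheses (a_gt0 : 0 < a) (a_le_c : a <= c).
Hypotheses (D_ge0 : forall x y, 0 <= D x y)
           (D_eq0 : forall x y, D x y = 0 <-> x = y)
           (DC : forall x y, D x y = D y x)
           (D_bounds : forall x y, x <> y -> a <= D x y <= c).

Let D_le_c x y : D x y <= c.
Proof.
have [<-|/D_bounds/andP[] //] := pselect (x = y).
by rewrite (proj2 (D_eq0 x x) erefl) (le_trans (ltW a_gt0)).
Qed.

Lemma bmetric_with_bounded_semimetric K :
  1 <= K -> c <= K * (2 * a) -> bmetric_with D K.
Proof.
move=> K_ge1 c_le; split=> // x y z.
have [<-|nxy] := pselect (x = y).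
  by rewrite (proj2 (D_eq0 x x) erefl) add0r ler_peMl.
have [<-|nyz] := pselect (y = z).
  by rewrite (proj2 (D_eq0 y y) erefl) addr0 ler_peMl.
have a_le_D u v : u <> v -> a <= D u v by move/D_bounds/andP=> [].
rewrite (le_trans (D_le_c x z)) // (le_trans c_le) // ler_wpM2l ?(le_trans ler01) //.
by rewrite mulr2n mulrDl mul1r lerD ?a_le_D.
Qed.

End BoundedSemimetric.

Section ProductDistance.

Variables (R : realType) (n : nat) (F : ('I_n -> R) -> R).
Variables (X : 'I_n -> Type) (d : forall i, X i -> X i -> R).

Hypotheses (F_ge0 : maps_into_Rplus F) (F_amenable : amenable F).
Hypotheses (d_ge0 : forall i x y, 0 <= d i x y)
           (d_eq0 : forall i x y, d i x y = 0 <-> x = y)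
           (dC : forall i x y, d i x y = d i y x).

Let dvec_ge0 x y : nonneg_vec (fun i => d i (x i) (y i)).
Proof. by move=> i; exact: d_ge0. Qed.

Lemma prod_dist_ge0 x y : 0 <= prod_dist F d x y.
Proof. exact: F_ge0. Qed.

Lemma prod_dist_eq0 x y : prod_dist F d x y = 0 <-> x = y.
Proof.
split=> [/(F_amenable _ (dvec_ge0 x y)) dxy0|<-].
  by apply: functional_extensionality_dep => i; apply/d_eq0/dxy0.
by apply/(F_amenable _ (dvec_ge0 x x)) => i; apply/d_eq0.
Qed.

Lemma prod_distC x y : prod_dist F d x y = prod_dist F d y x.
Proof. by congr F; apply: functional_extensionality_dep => i; exact: dC. Qed.

Lemma prod_dist_bounds (a c : R) :
  (forall v, nonneg_vec v -> ~ zero_vec v -> a <= F v <= c) ->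
  forall x y, x <> y -> a <= prod_dist F d x y <= c.
Proof.
move=> F_bounds x y nxy; apply: F_bounds _ (dvec_ge0 x y) _.
by move=> /(F_amenable _ (dvec_ge0 x y))/prod_dist_eq0.
Qed.

End ProductDistance.

Theorem proposition3p2 (R : realType) (n : nat) (F : ('I_n -> R) -> R) (a c : R) :
  maps_into_Rplus F -> amenable F ->
  0 < a -> a <= c ->
  (forall x, nonneg_vec x -> ~ zero_vec x -> a <= F x <= c) ->
  forall (X : 'I_n -> Type) (d : forall i, X i -> X i -> R),
    (forall i, is_bmetric (d i)) ->
    bmetric_with (prod_dist F d) (Num.max 1 (c / (2 * a))).
Proof.
move=> F_ge0 F_amenable a_gt0 a_le_c F_bounds X d d_bmetric.
have d_ge0 i : forall x y, 0 <= d i x y by case: (d_bmetric i) => ? [].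
have d_eq0 i : forall x y, d i x y = 0 <-> x = y by case: (d_bmetric i) => ? [].
have dC i : forall x y, d i x y = d i y x by case: (d_bmetric i) => ? [].
apply: (@bmetric_with_bounded_semimetric R _ _ a c) => //.
- exact: prod_dist_ge0.
- exact: prod_dist_eq0.
- exact: prod_distC.
- exact: prod_dist_bounds.
- by rewrite le_max lexx.
- by rewrite -ler_pdivrMr ?mulr_gt0 // le_max lexx orbT.
Qed.
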